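(* Let $\mathcal{S}$ be a state space, let $\mathcal{A}\subset\mathbb{R}^d$ be an action space of finite positive Lebesgue measure, let $R:\mathcal{S}\times\mathcal{A}\to\mathbb{R}$ be a reward function, let $\tau(\cdot\mid s,a)$ be a transition kernel, and let $\gamma\in(0,1)$ and $\tilde{\alpha}>0$. Let $\mathcal{Q}$ be a probability distribution over (measurable) functions $Q:\mathcal{S}\times\mathcal{A}\to\mathbb{R}$ such that for every $(s,a)$ the random variable $Q(s,a)$, $Q\sim\mathcal{Q}$, has bounded support and is sub-Gaussian with mean $\mu(s,a)$ and variance proxy $\sigma^2(s,a)$. For a next state $s'$ define $$\mathcal{T}^{*}Q(s,a)=R(s,a)+\gamma\,\mathbb{E}_{Q\sim\mathcal{Q}}\Big[\tilde{\alpha}\log\Big(\int_{\mathcal{A}}\exp\big(\tilde{\alpha}^{-1}Q(s',a')\big)\,da'\Big)\Big],$$ and let $$\mathcal{T}^{*}\mu(s,a)=R(s,a)+\gamma\,\mathbb{E}_{s'\sim\tau(\cdot\mid s,a)}\Big[\tilde{\alpha}\log\Big(\int_{\mathcal{A}}\exp\big(\tilde{\alpha}^{-1}\mu(s',a')\big)\,da'\Big)\Big].$$ Define the overestimation error $\epsilon(s,a)=\mathbb{E}_{s'\sim\tau(\cdot\mid s,a)}\big[\mathcal{T}^{*}Q(s,a)\big]-\mathcal{T}^{*}\mu(s,a)$. Then for all $(s,a)$, $$\epsilon(s,a)\le\frac{\gamma}{2\tilde{\alpha}}\,\mathbb{E}_{s'\sim\tau(\cdot\mid s,a)}\Big[\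sup_{a'\in\mathcal{A}}\sigma^2(s',a')\Big].$$
   Context: A real random variable $X$ with mean $\mu=\mathbb{E}[X]$ is called sub-Gaussian with variance proxy $\sigma^2$ if $\mathbb{E}[\exp(\lambda X)]\le\exp(\lambda\mu+\tfrac12\lambda^2\sigma^2)$ for all $\lambda\in\mathbb{R}$. Here $\mu(s,a)=\mathbb{E}_{Q\sim\mathcal{Q}}[Q(s,a)]$, and all expectations are assumed well defined. *)

From HB Require Import structures.
From mathcomp Require Import all_boot all_order all_algebra.
From mathcomp Require Import all_classical all_reals all_analysis.
From mathcomp Require Import measurable_realfun.
Set Implicit Arguments. Unset Strict Implicit. Unset Printing Implicit Defensive.
Import Order.TTheory GRing.Theory Num.Theory.
Local Open Scope classical_set_scope.
Local Open Scope ring_scope.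

(* d-dimensional Lebesgue measure on R^d = d.-tuple R, defined as the  *)
(* iterated product of the 1-dimensional Lebesgue measure (on the      *)
(* product sigma-algebra of the tuple type).                           *)
Definition tuple_cons (R : realType) (n : nat) (p : R * n.-tuple R)
  : n.+1.-tuple R := [tuple of p.1 :: p.2].

Fixpoint lebesgue_tuple (R : realType) (n : nat)
  : set (n.-tuple R) -> \bar R :=
  match n with
  | 0 => \d_([tuple] : 0.-tuple R)
  | n'.+1 => pushforward
               ((@lebesgue_measure R) \x (@lebesgue_tuple R n'))%E
               (@tuple_cons R n')
  end.

Definition subgaussian d (Omega : measurableType d) (R : realType)
  (P : probability Omega R) (X : Omega -> R) (m s2 : R) : Prop :=
  [/\ measurable_fun setT X,
      (\int[P]_w (X w)%:E = m%:E)%E &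
      forall l : R,
        (\int[P]_w (expR (l * X w))%:E <=
          (expR (l * m + l ^+ 2 * s2 / 2))%:E)%E].

Definition soft_value (R : realType) (d : nat) (A : set (d.-tuple R))
  (alpha : R) (f : d.-tuple R -> R) : R :=
  alpha * ln (fine (\int[@lebesgue_tuple R d]_(a' in A)
                      (expR (f a' / alpha))%:E)%E).

Definition TstarQ d (Omega : measurableType d) (R : realType)
  (P : probability Omega R) (S : Type) (dA : nat)
  (A : set (dA.-tuple R)) (rew : S -> dA.-tuple R -> R) (gamma alpha : R)
  (Q : Omega -> S -> dA.-tuple R -> R) (s : S) (a : dA.-tuple R) (s' : S)
  : R :=
  rew s a + gamma * fine (\int[P]_w (soft_value A alpha (Q w s'))%:E)%E.

Definition Tstarmu dS (S : measurableType dS) (R : realType) (dA : nat)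
  (A : set (dA.-tuple R)) (rew : S -> dA.-tuple R -> R) (gamma alpha : R)
  (tau : R.-pker (S * dA.-tuple R)%type ~> S)
  (mu : S -> dA.-tuple R -> R) (s : S) (a : dA.-tuple R) : R :=
  rew s a + gamma * fine (\int[tau (s, a)]_s' (soft_value A alpha (mu s'))%:E)%E.

Definition overest_error dO (Omega : measurableType dO) dS
  (S : measurableType dS) (R : realType) (P : probability Omega R) (dA : nat)
  (A : set (dA.-tuple R)) (rew : S -> dA.-tuple R -> R) (gamma alpha : R)
  (tau : R.-pker (S * dA.-tuple R)%type ~> S)
  (Q : Omega -> S -> dA.-tuple R -> R) (mu : S -> dA.-tuple R -> R)
  (s : S) (a : dA.-tuple R) : \bar R :=
  (\int[tau (s, a)]_s' (TstarQ P A rew gamma alpha Q s a s')%:E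
   - (Tstarmu A rew gamma alpha tau mu s a)%:E)%E.

From HB Require Import structures.
From mathcomp Require Import all_boot all_order all_algebra.
From mathcomp Require Import all_classical all_reals all_analysis.
From mathcomp Require Import measurable_realfun.
From mathcomp Require Import ring lra.
Import Order.TTheory GRing.Theory Num.Theory.
Local Open Scope classical_set_scope.
Local Open Scope ring_scope.
Set Implicit Arguments. Unset Strict Implicit. Unset Printing Implicit Defensive.

(* Fix the next state s' and let S2 be the supremum of sigma2(s', .) over A.
   By Tonelli and the sub-Gaussian moment bound at lambda = 1/alpha,
     E_Q [int_A exp(Q(s',a')/alpha) da']
       <= exp(S2 / (2 alpha^2)) * int_A exp(mu(s',a')/alpha) da',
   and Jensen's inequality for the concave ln turns this into
     E_Q [soft value of Q(s',.)] <= soft value of mu(s',.) + S2 / (2 alpha).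
   Integrating over s' ~ tau(.|s,a), the rewards cancel and the gap gets the
   factor gamma. *)

(* The library's sigma-finite instance on [m1 \x m2] is shadowed by the one for
   products of subprobabilities, hence this alias. *)
Section sigma_finite_product.
Local Open Scope ereal_scope.
Context d1 d2 (T1 : measurableType d1) (T2 : measurableType d2) (R : realType).
Variables (m1 : {sigma_finite_measure set T1 -> \bar R})
  (m2 : {sigma_finite_measure set T2 -> \bar R}).

Definition sf_product_measure := (m1 \x m2)%E.

HB.instance Definition _ := Measure.copy sf_product_measure (m1 \x m2)%E.

Lemma product_measure_sigma_finite : sigma_finite setT sf_product_measure.
Proof.
have /sigma_finiteP[F [TF ndF Foo]] := sigma_finiteT m1.
have /sigma_finiteP[G [TG ndG Goo]] := sigma_finiteT m2.
exists (fun n => F n `*` G n).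
  rewrite -setXTT TF TG; apply/seteqP; split => -[x y]; last first.
    by move=> [n _ [/= Fx Gy]]; split; exists n.
  move=> [/= [i _ Fx] [j _ Gy]]; exists (maxn i j) => //; split.
  - by move: x Fx; exact/subsetPset/ndF/leq_maxl.
  - by move: y Gy; exact/subsetPset/ndG/leq_maxr.
move=> n; have [mF Fn_fin] := Foo n; have [mG Gn_fin] := Goo n.
split; first exact: measurableX.
by rewrite /sf_product_measure product_measure1E// lte_mul_pinfty// ge0_fin_numE.
Qed.

HB.instance Definition _ := Measure_isSigmaFinite.Build _ _ _
  sf_product_measure product_measure_sigma_finite.

End sigma_finite_product.

Section pushforward_bij.
Local Open Scope ereal_scope.
Context d d' (T1 : measurableType d) (T2 : measurableType d') (R : realType).
Variables (m : {sigma_finite_measure set T1 -> \bar R}) (f : T1 -> T2) (g : T2 -> T1).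
Hypotheses (mf : measurable_fun setT f) (mg : measurable_fun setT g) (gf : cancel f g).

Lemma pushforward_sigma_finite : sigma_finite setT (pushforward m f).
Proof.
have [F TF Fm] := sigma_finiteT m.
exists (fun i => g @^-1` F i); first by rewrite -preimage_bigcup -TF.
move=> i; have [mFi mFi_fin] := Fm i; split.
  by rewrite -[X in measurable X]setTI; exact: mg.
rewrite /pushforward -comp_preimage (_ : (g \o f) @^-1` F i = F i)//.
by apply/seteqP; split => x /=; rewrite gf.
Qed.

(* The library's measure instance on [pushforward m f] takes the proof [mf] as
   a parameter that unification cannot infer; recording the proofs in the
   definition makes the instances below canonical. *)
Definition pushforward_bij of measurable_fun setT f & measurable_fun setT g
  & cancel f g := pushforward m f.

HB.instance Definition _ := Measure.copy (pushforward_bij mf mg gf)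
  (Measure.sort (measure_function_pushforward__canonical__measure_function_Measure m mf)).
HB.instance Definition _ := Measure_isSigmaFinite.Build _ _ _
  (pushforward_bij mf mg gf) pushforward_sigma_finite.

End pushforward_bij.

Lemma lebesgue_tuple_sigma_finite (R : realType) (n : nat) :
  exists m : {sigma_finite_measure set (n.-tuple R) -> \bar R},
    @lebesgue_tuple R n = m.
Proof.
elim: n => [|n [m IHm]]; first by exists \d_([tuple] : 0.-tuple R).
have mcons : measurable_fun setT (@tuple_cons R n).
  exact: (measurable_cons measurable_fst measurable_snd).
pose uncons (t : n.+1.-tuple R) := (thead t, [tuple of behead t]).
have muncons : measurable_fun setT uncons.
  by apply: measurable_fun_pair; [exact: measurable_tnth | exact: measurable_behead].
have consK : cancel (@tuple_cons R n) uncons.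
  by case=> x t; congr pair; exact: val_inj.
exists (pushforward_bij (sf_product_measure (@lebesgue_measure R) m) mcons muncons consK).
by rewrite /= IHm.
Qed.

Lemma lebesgue_tuple_gt0_nonempty (R : realType) (n : nat) (A : set (n.-tuple R)) :
  (0 < @lebesgue_tuple R n A)%E -> A !=set0.
Proof.
have [m ->] := lebesgue_tuple_sigma_finite R n.
by move=> A0; apply/set0P/eqP => A_eq0; move: A0; rewrite A_eq0 measure0 ltxx.
Qed.

Section fubini_tonelli_in.
Local Open Scope ereal_scope.
Context d1 d2 (T1 : measurableType d1) (T2 : measurableType d2) (R : realType).
Variables (m1 : {sigma_finite_measure set T1 -> \bar R})
  (m2 : {sigma_finite_measure set T2 -> \bar R}).
Variables (A : set T2) (f : T1 * T2 -> \bar R).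
Hypotheses (mA : measurable A) (mf : measurable_fun setT f) (f0 : forall z, 0 <= f z).

Let fA := f \_ (setT `*` A).

Let mfA : measurable_fun setT fA.
Proof. exact/(measurable_restrictT _ (measurableX measurableT mA))/measurable_funTS. Qed.

Let fA0 z : 0 <= fA z.
Proof. by rewrite /fA patchE; case: ifP. Qed.

Let fAE x : (fun y => fA (x, y)) = (fun y => f (x, y)) \_ A.
Proof. by apply/funext => y; rewrite /fA !patchE in_setX in_setT. Qed.

Let integral_inE x : \int[m2]_(y in A) f (x, y) = fubini_F m2 fA x.
Proof. by rewrite integral_mkcond /fubini_F fAE. Qed.

Lemma measurable_fun_integral_in :
  measurable_fun setT (fun x => \int[m2]_(y in A) f (x, y)).
Proof.
rewrite (funext integral_inE); exact: measurable_fun_fubini_tonelli_F.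
Qed.

Lemma fubini_tonelli_in :
  \int[m1]_x \int[m2]_(y in A) f (x, y) = \int[m2]_(y in A) \int[m1]_x f (x, y).
Proof.
rewrite (eq_integral (fubini_F m2 fA)); last by move=> x _; exact: integral_inE.
rewrite (fubini_tonelli _ mfA fA0).
rewrite [RHS]integral_mkcond; apply: eq_integral => y _.
rewrite /fubini_G patchE; case: ifPn => yA.
  by apply: eq_integral => x _; rewrite /fA patchE in_setX in_setT yA.
by apply: integral0_eq => x _; rewrite /fA patchE in_setX in_setT (negbTE yA).
Qed.

End fubini_tonelli_in.

Lemma integral_fine_gt0 d (T : measurableType d) (R : realType)
    (m : {measure set T -> \bar R}) (A : set T) (g : T -> R) :
  measurable A -> (0 < m A)%E -> (forall x, A x -> 0 < g x) ->
  m.-integrable A (fun x => (g x)%:E) ->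
  0 < fine (\int[m]_(x in A) (g x)%:E)%E.
Proof.
move=> mA mA0 g0 intg.
have int_ge0 : (0 <= \int[m]_(x in A) (g x)%:E)%E.
  by apply: integral_ge0 => x Ax; rewrite lee_fin ltW// g0.
rewrite lt_neqAle fine_ge0// andbT eq_sym; apply/negP => /eqP int0.
have {}int0 : (\int[m]_(x in A) (g x)%:E = 0)%E.
  by rewrite -[LHS]fineK ?int0//; exact: integrable_fin_num.
have [mg _] := integrableP _ _ _ intg.
have : (\int[m]_(x in A) `|(g x)%:E|)%E = 0%E.
  rewrite -int0; apply: eq_integral => x /set_mem Ax.
  by rewrite gee0_abs// lee_fin ltW// g0.
move/(ae_eq_integral_abs m mA mg) => [N [mN mN0 gN]].
suff : (m A <= m N)%E by rewrite mN0 leNgt mA0.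
apply: le_measure; rewrite ?inE// => x Ax; apply: gN => /(_ Ax) /eqP.
by rewrite eqe gt_eqF// g0.
Qed.

Lemma integralB_le d (T : measurableType d) (R : realType)
    (mu : {measure set T -> \bar R}) (f g h : T -> \bar R) :
  mu.-integrable setT f -> mu.-integrable setT g ->
  measurable_fun setT h -> (forall x, 0 <= h x)%E ->
  (forall x, f x - g x <= h x)%E ->
  (\int[mu]_x f x - \int[mu]_x g x <= \int[mu]_x h x)%E.
Proof.
move=> intf intg mh h0 fgh; rewrite -integralB// integralE -[leRHS]sube0.
apply: leeB; last by apply: integral_ge0 => x _; exact: funeneg_ge0.
apply: ge0_le_integral => //.
- by apply: measurable_funepos; case/integrableP: (integrableB measurableT intf intg).
- by move=> x _; rewrite funeposE /= ge_max fgh h0.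
Qed.

Section unit_mass_measure.
Local Open Scope ereal_scope.
Context d (T : measurableType d) (R : realType) (mu : {measure set T -> \bar R}).
Hypothesis mu1 : mu setT = 1.
Implicit Types (f F : T -> R) (a b c : R).

Let integrable_cst a : mu.-integrable setT (fun=> a%:E).
Proof.
by apply/integrableP; split => //; rewrite integral_cst// mu1 mule1 ltry.
Qed.

Lemma integral_affine f a b : mu.-integrable setT (fun x => (f x)%:E) ->
  \int[mu]_x (a + b * f x)%:E = a%:E + b%:E * \int[mu]_x (f x)%:E.
Proof.
move=> intf; under eq_integral do rewrite EFinD EFinM.
by rewrite integralD ?integralZl ?integral_cst ?mu1 ?mule1//; exact: integrableZl.
Qed.

Lemma integrable_affine_inv f a b : b != 0%R ->
  mu.-integrable setT (fun x => (a + b * f x)%:E) ->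
  mu.-integrable setT (fun x => (f x)%:E).
Proof.
move=> b0 intaf.
apply: (eq_integrable measurableT (fun x => b^-1%:E * ((a + b * f x)%:E - a%:E))).
  by move=> x _; rewrite -EFinB -EFinM addrC addKr mulKf.
exact/integrableZl/(integrableB measurableT intaf).
Qed.

Lemma integral_affine_subE f g a b :
  mu.-integrable setT (fun x => (f x)%:E) -> mu.-integrable setT (fun x => (g x)%:E) ->
  \int[mu]_x (a + b * f x)%:E - (a + b * fine (\int[mu]_x (g x)%:E))%:E =
  b%:E * (\int[mu]_x (f x)%:E - \int[mu]_x (g x)%:E).
Proof.
move=> intf intg; rewrite integral_affine//.
move: (integrable_fin_num measurableT intf) (integrable_fin_num measurableT intg).
case: (\int[mu]_x (f x)%:E) => // u _; case: (\int[mu]_x (g x)%:E) => // v _.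
by rewrite /= -EFinM -EFinD -!EFinB -EFinM; congr EFin; ring.
Qed.

Lemma integral_ln_le F c : (0 < c)%R -> (forall x, 0 < F x)%R ->
  mu.-integrable setT (fun x => (F x)%:E) ->
  mu.-integrable setT (fun x => (ln (F x))%:E) ->
  \int[mu]_x (F x)%:E <= c%:E -> \int[mu]_x (ln (F x))%:E <= (ln c)%:E.
Proof.
move=> c0 F0 intF intlnF intF_le.
(* tangent line of the concave [ln] at [c] *)
have ln_tangent x : (ln (F x) <= (ln c - 1) + c^-1 * F x)%R.
  have := expR_ge1Dx (ln (F x) - ln c).
  by rewrite expRB !lnK ?posrE// mulrC; lra.
apply: le_trans (_ : \int[mu]_x ((ln c - 1) + c^-1 * F x)%:E <= _).
  apply: le_integral => //; last by move=> x _; rewrite lee_fin ln_tangent.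
  under eq_fun do rewrite EFinD EFinM.
  exact: integrableD (integrable_cst _) (integrableZl _ _ intF).
have intF_fin := integrable_fin_num measurableT intF.
rewrite integral_affine// -(fineK intF_fin) -EFinM -EFinD lee_fin.
have : (c^-1 * fine (\int[mu]_x (F x)%:E) <= 1)%R.
  by rewrite ler_pdivrMl// mulr1 -lee_fin fineK.
lra.
Qed.

End unit_mass_measure.

Section subgaussian.
Local Open Scope ereal_scope.
Context d (T : measurableType d) (R : realType) (P : probability T R).
Variables (X : T -> R) (m s2 : R).
Hypothesis sgX : subgaussian P X m s2.

Lemma subgaussian_integrable_expR l :
  P.-integrable setT (fun x => (expR (l * X x))%:E).
Proof.
have [mX _ mgf] := sgX; apply/integrableP; split.
  by apply/measurable_EFinP/measurableT_comp => //; exact: measurable_funM.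
under eq_integral do rewrite gee0_abs ?lee_fin ?expR_ge0//.
by rewrite (le_lt_trans (mgf l)) ?ltry.
Qed.

Lemma subgaussian_integrable : P.-integrable setT (fun x => (X x)%:E).
Proof.
have [mX _ _] := sgX; apply/integrableP; split; first exact/measurable_EFinP.
have exp_bound x : (`|X x| <= expR (1 * X x) + expR (-1 * X x))%R.
  rewrite mul1r mulN1r; have := expR_ge1Dx (X x); have := expR_ge1Dx (- X x).
  have := expR_gt0 (X x); have := expR_gt0 (- X x).
  by case: (lerP 0 (X x)) => X0; [rewrite ger0_norm|rewrite ltr0_norm]; lra.
apply: le_lt_trans
  (_ : _ <= \int[P]_x ((expR (1 * X x))%:E + (expR (-1 * X x))%:E)) _.
  apply: ge0_le_integral => //.
  - exact/measurableT_comp/measurable_EFinP.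
  - apply: emeasurable_funD.
      by case/integrableP: (subgaussian_integrable_expR 1).
    by case/integrableP: (subgaussian_integrable_expR (-1)).
  - by move=> x _; rewrite -EFinD lee_fin exp_bound.
rewrite integralD//; try exact: subgaussian_integrable_expR.
rewrite lte_add_pinfty//.
  exact: integrable_lty (subgaussian_integrable_expR 1).
exact: integrable_lty (subgaussian_integrable_expR (-1)).
Qed.

(* Jensen: [m = E[ln (expR X)] <= ln E[expR X] <= m + s2 / 2] *)
Lemma subgaussian_variance_proxy_ge0 : (0 <= s2)%R.
Proof.
have [_ EX mgf] := sgX.
have : \int[P]_x (ln (expR (X x)))%:E <= (ln (expR (m + s2 / 2)%R))%:E.
  apply: (integral_ln_le (probability_setT P)).
  - exact: expR_gt0.
  - by move=> x; exact: expR_gt0.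
  - by under eq_fun do rewrite -[X _]mul1r; exact: subgaussian_integrable_expR.
  - by under eq_fun do rewrite expRK; exact: subgaussian_integrable.
  - under eq_integral do rewrite -[X _]mul1r.
    by rewrite (le_trans (mgf 1%R))// expr1n !mul1r.
under eq_integral do rewrite expRK.
by rewrite EX expRK lee_fin; lra.
Qed.

End subgaussian.

Definition msoft_value d (T : measurableType d) (R : realType)
    (m : set T -> \bar R) (A : set T) (alpha : R) (f : T -> R) : R :=
  alpha * ln (fine (\int[m]_(a in A) (expR (f a / alpha))%:E)%E).

Section msoft_value_expectation.
Local Open Scope ereal_scope.
Context dO (Omega : measurableType dO) dT (T : measurableType dT) (R : realType).
Variables (P : probability Omega R) (m : {sigma_finite_measure set T -> \bar R}).
Variables (A : set T) (alpha k : R) (q : Omega -> T -> R) (mu s2 : T -> R).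
Hypotheses (mA : measurable A) (mA0 : 0 < m A) (alpha0 : (0 < alpha)%R).
Hypothesis sgq : forall a, A a -> subgaussian P (q^~ a) (mu a) (s2 a).
Hypothesis s2k : forall a, A a -> (s2 a <= k)%R.
Hypothesis mq : measurable_fun setT (fun p : Omega * T => q p.1 p.2).
Hypothesis intq : forall w, m.-integrable A (fun a => (expR (q w a / alpha))%:E).
Hypothesis intmu : m.-integrable A (fun a => (expR (mu a / alpha))%:E).

Let Fq w := fine (\int[m]_(a in A) (expR (q w a / alpha))%:E).
Let Fmu := fine (\int[m]_(a in A) (expR (mu a / alpha))%:E).

Let FqE w : (Fq w)%:E = \int[m]_(a in A) (expR (q w a / alpha))%:E.
Proof. by rewrite fineK//; exact: integrable_fin_num. Qed.

Let Fq_gt0 w : (0 < Fq w)%R.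
Proof. by apply: integral_fine_gt0 => // a _; exact: expR_gt0. Qed.

Let mexpq : measurable_fun setT (fun p : Omega * T => (expR (q p.1 p.2 / alpha))%:E).
Proof. by apply/measurable_EFinP/measurableT_comp => //; exact: measurable_funM. Qed.

Let expq_ge0 p : 0 <= (expR (q p.1 p.2 / alpha))%:E.
Proof. by rewrite lee_fin expR_ge0. Qed.

Let mFq : measurable_fun setT (fun w => (Fq w)%:E).
Proof. by rewrite (funext FqE); exact: (measurable_fun_integral_in m mA mexpq). Qed.

Let expectation_expq_le a : A a ->
  \int[P]_w (expR (q w a / alpha))%:E <=
  (expR (k / (2 * alpha ^+ 2)) * expR (mu a / alpha))%:E.
Proof.
move=> Aa; have [_ _ /(_ alpha^-1%R) mgf] := sgq Aa.
under eq_integral do rewrite mulrC.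
apply: (le_trans mgf); rewrite lee_fin -expRD ler_expR.
have : (alpha^-1 ^+ 2 * s2 a <= alpha^-1 ^+ 2 * k)%R.
  by rewrite ler_wpM2l ?sqr_ge0 ?s2k.
by rewrite exprVn; lra.
Qed.

Lemma expectation_integral_expR_le :
  \int[P]_w (Fq w)%:E <= (expR (k / (2 * alpha ^+ 2)) * Fmu)%:E.
Proof.
under eq_integral do rewrite FqE.
rewrite (fubini_tonelli_in P m mA mexpq expq_ge0).
apply: (@le_trans _ _ (\int[m]_(a in A)
    (expR (k / (2 * alpha ^+ 2)) * expR (mu a / alpha))%:E)).
  apply: (ge0_le_integral m mA _ _ _ expectation_expq_le).
  - by move=> a _; exact: integral_ge0.
  - apply: (measurable_funS measurableT (subsetT A)).
    exact: (measurable_fun_fubini_tonelli_G (m1 := P) _ mexpq expq_ge0).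
  - apply/measurable_EFinP/measurable_funM => //.
    by case/integrableP: intmu => /measurable_EFinP.
under eq_integral do rewrite EFinM.
by rewrite integralZl// EFinM /Fmu fineK//; exact: integrable_fin_num.
Qed.

Lemma expectation_msoft_value_le :
  P.-integrable setT (fun w => (msoft_value m A alpha (q w))%:E) ->
  \int[P]_w (msoft_value m A alpha (q w))%:E <=
  (msoft_value m A alpha mu + k / (2 * alpha))%:E.
Proof.
move=> intV.
have Fmu_gt0 : (0 < Fmu)%R.
  by apply: integral_fine_gt0 => // a _; exact: expR_gt0.
have intlnFq : P.-integrable setT (fun w => (ln (Fq w))%:E).
  apply: (integrable_affine_inv (a := 0%R) (b := alpha) (probability_setT P)).
    by rewrite gt_eqF.
  by apply: (eq_integrable measurableT _ _ _ intV) => w _; rewrite add0r.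
have intFq : P.-integrable setT (fun w => (Fq w)%:E).
  apply/integrableP; split => //.
  under eq_integral do rewrite gee0_abs ?lee_fin ?(ltW (Fq_gt0 _))//.
  by apply: le_lt_trans expectation_integral_expR_le _; rewrite ltry.
have ln_le := integral_ln_le (probability_setT P) (mulr_gt0 (expR_gt0 _) Fmu_gt0)
  Fq_gt0 intFq intlnFq expectation_integral_expR_le.
rewrite (eq_integral (fun w => (0 + alpha * ln (Fq w))%:E)); last first.
  by move=> w _; rewrite add0r.
rewrite (integral_affine (probability_setT P))// add0e -lee_pdivlMl ?lte_fin//.
apply: le_trans ln_le _.
rewrite lee_fin /msoft_value -/Fmu lnM ?posrE ?expR_gt0// expRK.
rewrite [leRHS](_ : _ = k / (2 * alpha ^+ 2) + ln Fmu)%R//.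
by field; exact: lt0r_neq0.
Qed.

End msoft_value_expectation.

Lemma expectation_soft_value_sub_le (R : realType) (n : nat) (A : set (n.-tuple R))
    (alpha : R) dO (Omega : measurableType dO) (P : probability Omega R)
    (q : Omega -> n.-tuple R -> R) (mu s2 : n.-tuple R -> R) :
  measurable A -> (0 < @lebesgue_tuple R n A)%E -> 0 < alpha ->
  (forall a, subgaussian P (q^~ a) (mu a) (s2 a)) ->
  measurable_fun setT (fun p : Omega * n.-tuple R => q p.1 p.2) ->
  (forall w, (@lebesgue_tuple R n).-integrable A (fun a => (expR (q w a / alpha))%:E)) ->
  (@lebesgue_tuple R n).-integrable A (fun a => (expR (mu a / alpha))%:E) ->
  P.-integrable setT (fun w => (soft_value A alpha (q w))%:E) ->
  (\int[P]_w (soft_value A alpha (q w))%:E - (soft_value A alpha mu)%:E <=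
   ((2 * alpha)^-1)%:E * ereal_sup [set (s2 a)%:E | a in A])%E.
Proof.
move=> mA A0 alpha0 sgq mq intq intmu intV.
have [a0 Aa0] := lebesgue_tuple_gt0_nonempty A0.
have [m lebE] := lebesgue_tuple_sigma_finite R n.
rewrite /soft_value lebE in intV *; rewrite lebE in A0 intq intmu.
have : ((s2 a0)%:E <= ereal_sup [set (s2 a)%:E | a in A])%E.
  by apply: ereal_sup_ubound; exists a0.
case Ks : ereal_sup => [k | | //] s2_le; last first.
  by rewrite gt0_muley ?leey// lte_fin invr_gt0 mulr_gt0.
have s2k a : A a -> s2 a <= k.
  by move=> Aa; rewrite -lee_fin -Ks; apply: ereal_sup_ubound; exists a.
rewrite leeBlDr// -EFinM -EFinD.
apply: le_trans
  (expectation_msoft_value_le mA A0 alpha0 (fun a _ => sgq a) s2k mq intq intmu intV) _.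
by rewrite lee_fin addrC mulrC.
Qed.

Unset Implicit Arguments.

Theorem theorem2 (R : realType)
  (dS : measure_display) (S : measurableType dS)
  (dA : nat) (A : set (dA.-tuple R))
  (rew : S -> dA.-tuple R -> R)
  (tau : R.-pker (S * dA.-tuple R)%type ~> S)
  (gamma alpha : R)
  (dO : measure_display) (Omega : measurableType dO) (P : probability Omega R)
  (Q : Omega -> S -> dA.-tuple R -> R)
  (mu sigma2 : S -> dA.-tuple R -> R) :
  (* action space: finite positive Lebesgue measure *)
  measurable A ->
  (0 < @lebesgue_tuple R dA A)%E -> (@lebesgue_tuple R dA A < +oo)%E ->
  0 < gamma < 1 -> 0 < alpha ->
  (* Q(s,a), Q ~ calQ, has bounded support ... *)
  (forall s a, exists M : R, {ae P, forall w, `|Q w s a| <= M}) ->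
  (* ... and is sub-Gaussian with mean mu(s,a), variance proxy sigma2(s,a) *)
  (forall s a, subgaussian P (fun w => Q w s a) (mu s a) (sigma2 s a)) ->
  (* all expectations / integrals are well defined *)
  (forall s', measurable_fun setT (fun p : Omega * dA.-tuple R => Q p.1 s' p.2)) ->
  (forall s' w, (@lebesgue_tuple R dA).-integrable A
                  (fun a' => (expR (Q w s' a' / alpha))%:E)) ->
  (forall s', (@lebesgue_tuple R dA).-integrable A
                  (fun a' => (expR (mu s' a' / alpha))%:E)) ->
  (forall s', P.-integrable setT (fun w => (soft_value A alpha (Q w s'))%:E)) ->
  (forall s a, (tau (s, a)).-integrable setT
                 (fun s' => (TstarQ P A rew gamma alpha Q s a s')%:E)) ->
  (forall s a, (tau (s, a)).-integrable setT
                 (fun s' => (soft_value A alpha (mu s'))%:E)) ->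
  measurable_fun [set: S]
    ((fun s' => ereal_sup [set (sigma2 s' a')%:E | a' in A]) : S -> \bar R) ->
  forall (s : S) (a : dA.-tuple R),
    (overest_error P A rew gamma alpha tau Q mu s a <=
     (gamma / (2 * alpha))%:E *
       \int[tau (s, a)]_s' ereal_sup [set (sigma2 s' a')%:E | a' in A])%E.
Proof.
move=> mA A0 _ /andP[gamma0 _] alpha0 _ sgQ mQ intQ intmu intsvQ intTQ intVmu mKs s a.
set Ks := fun s' => ereal_sup _.
set VQ := fun s' => fine (\int[P]_w (soft_value A alpha (Q w s'))%:E).
set Vmu := fun s' => soft_value A alpha (mu s').
have tau1 : (tau (s, a) setT = 1)%E := prob_kernel (s, a).
have [a0 Aa0] := lebesgue_tuple_gt0_nonempty A0.
have Ks_ge0 s' : (0 <= Ks s')%E.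
  apply: le_trans (_ : (sigma2 s' a0)%:E <= _)%E.
    by rewrite lee_fin; exact: subgaussian_variance_proxy_ge0 (sgQ s' a0).
  by apply: ereal_sup_ubound; exists a0.
have gap s' : ((VQ s')%:E - (Vmu s')%:E <= ((2 * alpha)^-1)%:E * Ks s')%E.
  rewrite /VQ fineK; last exact: integrable_fin_num (intsvQ s').
  exact: expectation_soft_value_sub_le.
have intVQ : (tau (s, a)).-integrable setT (fun s' => (VQ s')%:E).
  exact: (integrable_affine_inv (f := VQ) (a := rew s a) tau1 (lt0r_neq0 gamma0)
    (intTQ s a)).
rewrite (integral_affine_subE tau1 (rew s a) gamma intVQ (intVmu s a) :
  overest_error P A rew gamma alpha tau Q mu s a = _).
have c_ge0 : (0 <= ((2 * alpha)^-1)%:E)%E.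
  by rewrite lee_fin invr_ge0 mulr_ge0// ltW.
rewrite EFinM -muleA -ge0_integralZl//; last by move=> s' _; exact: Ks_ge0.
apply: lee_wpmul2l; first by rewrite lee_fin ltW.
apply: integralB_le => //; first exact: emeasurable_funM.
by move=> s'; apply: mule_ge0 => //; exact: Ks_ge0.
Qed.
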